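(* Let $r\ge 2$, $k\ge 3$, $m\ge 2$ be integers. (1) If there is a coloring of $\mathbb{Z}_m$ with $r$ colors containing no nontrivial monochromatic $k$-AP, then there is a constant $C$ (depending on $m,k$) such that for every $n$ there is a coloring of $[n]$ with $r$ colors whose number $N$ of monochromatic $k$-APs satisfies $\left|N-\frac{1}{2m(k-1)}n^2\right|\le Cn$. (2) If there is a coloring of $\mathbb{Z}_m\setminus\{0\}$ with $r$ colors such that, for each of the $r$ possible choices of color for $0$, the resulting coloring of $\mathbb{Z}_m$ contains no nontrivial monochromatic $k$-AP, then there is a constant $C$ (depending on $m,k$) such that for every $n$ there is a coloring of $[n]$ with $r$ colors whose number $N$ of monochromatic $k$-APs satisfies $\left|N-\frac{1}{2(m+1)(k-1)}n^2\right|\le Cn$.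
   Context: A $k$-AP in $[n]=\{1,\ldots,n\}$ is a sequence $a,a+d,\ldots,a+(k-1)d$ of elements of $[n]$ with integer $d\ge 1$. A $k$-AP in $\mathbb{Z}_m$ is a sequence $a,a+d,\ldots,a+(k-1)d$ with $a,d\in\mathbb{Z}_m$ (arithmetic mod $m$); it is trivial if $d\equiv 0\pmod m$ (i.e., all terms are equal) and nontrivial otherwise. A progression is monochromatic if all its terms receive the same color. *)

From HB Require Import structures.
From mathcomp Require Import all_boot all_order all_algebra.
Set Implicit Arguments. Unset Strict Implicit. Unset Printing Implicit Defensive.
Import Order.TTheory GRing.Theory Num.Theory.

Definition mono_AP_count (r k n : nat) (c : nat -> 'I_r) : nat :=
  \sum_(a < n.+1) \sum_(d < n.+1)
     [&& 0 < (a : nat), 0 < (d : nat), a + (k - 1) * d <= n &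
         [forall i : 'I_k, c (a + i * d) == c a]].

(* A coloring c of Z_m has a nontrivial monochromatic k-AP
   (to be used with 1 < m so that 'Z_m is Z/mZ). *)
Definition has_nontriv_mono_AP_Zm (r k m : nat) (c : 'Z_m -> 'I_r) : Prop :=
  exists a d : 'Z_m, (d != 0)%R /\ forall i : 'I_k, c (a + d *+ i)%R = c a.

From HB Require Import structures.
From mathcomp Require Import all_boot all_order all_algebra.
From mathcomp Require Import zify ring lra.
Import Order.TTheory GRing.Theory Num.Theory.
Set Implicit Arguments. Unset Strict Implicit. Unset Printing Implicit Defensive.

(* Write L = k - 1.  Counting each monochromatic k-AP of [n] by its last term x,
   the count is the sum over x <= n of the number of monochromatic APs ending
   at x (mono_AP_count_by_last_term).

   (1) If c colours Z_m without nontrivial monochromatic k-APs, colour x by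
   c (x mod m).  An AP is then monochromatic exactly when m divides d, so
   (x - 1) %/ (L * m) of them end at x, and summing these floors gives
   n^2 / (2 L m) up to an error 2 n (sum_floor_estimate).

   (2) If c works whatever colour 0 receives, use the self-similar colouring
   x |-> c (x mod m) for m not dividing x, and x |-> colour of x / m otherwise.
   A difference prime to m never gives a monochromatic AP, and dilation by m
   maps monochromatic APs onto monochromatic APs; hence, for T n the count,
   T n = F n - G (n %/ m) + T (n %/ m) with explicit floor sums F and G
   (self_similar_recursion), and induction on n gives |T n - n^2/(2 (m+1) L)|
   <= 8 n (self_similar_estimate). *)

Definition mono_ap (r k : nat) (col : nat -> 'I_r) (a d : nat) : bool :=
  [forall i : 'I_k, col (a + i * d) == col a].

Definition ends_at (r k : nat) (col : nat -> 'I_r) (x d : nat) : bool :=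
  [&& 0 < d, (k - 1) * d < x & mono_ap k col (x - (k - 1) * d) d].

Definition mono_ending (r k : nat) (col : nat -> 'I_r) (x : nat) : nat :=
  \sum_(0 <= d < x) ends_at k col x d.

Lemma sum_indicator_at (N b : nat) (p : nat -> bool) :
  \sum_(0 <= a < N) ((a == b) && p a) = (b < N) && p b.
Proof.
elim: N => [|N IH]; first by rewrite big_geq.
rewrite big_nat_recr //= IH.
case: (ltngtP b N) => [lt_bN|lt_Nb|->].
- by rewrite (ltn_trans lt_bN (ltnSn _)) addn0.
- by rewrite ltnS leqNgt lt_Nb.
- by rewrite ltnSn.
Qed.

Lemma nat_of_false (b : bool) : ~~ b -> (b : nat) = 0.
Proof. by move/negbTE ->. Qed.

Definition ap_term (r k : nat) (col : nat -> 'I_r) (n a d : nat) : bool :=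
  [&& 0 < a, 0 < d, a + (k - 1) * d <= n & mono_ap k col a d].

Section LastTermDecomposition.
Variables (r k : nat) (col : nat -> 'I_r).
Hypothesis k_gt1 : 1 < k.

(* Since d <= (k - 1) d, enlarging both summation ranges adds only zeros. *)
Lemma mono_AP_count_wide (n j : nat) :
  mono_AP_count k n col =
  \sum_(0 <= a < (n + j).+1) \sum_(0 <= d < (n + j).+1) ap_term k col n a d.
Proof.
elim: j => [|j IH].
  by rewrite addn0 /mono_AP_count big_mkord; apply: eq_bigr => a _; rewrite big_mkord.
have out_of_range a d : n < a \/ n < d -> ap_term k col n a d = false.
  move=> out; apply/negP => /and4P[_ _ + _]; case: out => ?; nia.
rewrite IH addnS [RHS]big_nat_recr //= [X in _ = _ + X]big1 ?addn0; last first.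
  by move=> d _; rewrite out_of_range //; left; lia.
apply: eq_bigr => a _; rewrite [RHS]big_nat_recr //= [in RHS]out_of_range ?addn0 //; right; lia.
Qed.

Lemma sum_last_term (x N : nat) : x <= N.+1 ->
  \sum_(0 <= a < N.+1) \sum_(0 <= d < N.+1)
     ((a + (k - 1) * d == x) && [&& 0 < a, 0 < d & mono_ap k col a d])
  = mono_ending k col x.
Proof.
move=> le_xN; rewrite exchange_big /mono_ending (big_cat_nat _ (n := x)) //=.
rewrite [X in _ + X]big_nat_cond [X in _ + X]big1 ?addn0; last first.
  move=> d /andP[/andP[le_xd _] _]; rewrite big1 // => a _.
  by apply/nat_of_false/negP => /andP[/eqP ? /and3P[? ? _]]; nia.
apply: eq_big_nat => d /andP[_ lt_dx]; rewrite /ends_at.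
have [lt_Ldx|le_xLd] := ltnP ((k - 1) * d) x; last first.
  rewrite andbF big1 // => a _.
  by apply/nat_of_false/negP => /andP[/eqP ? /and3P[? ? _]]; nia.
transitivity (\sum_(0 <= a < N.+1)
   ((a == x - (k - 1) * d) && [&& 0 < a, 0 < d & mono_ap k col a d]) : nat).
  by apply: eq_bigr => a _; congr (nat_of_bool (_ && _)); apply/eqP/eqP; nia.
rewrite sum_indicator_at; have [->|d_gt0] := posnP d; first by rewrite !andbF.
have -> : x - (k - 1) * d < N.+1 by nia.
by have -> : 0 < x - (k - 1) * d by nia.
Qed.

Lemma mono_AP_count_succ (n : nat) :
  mono_AP_count k n.+1 col = mono_AP_count k n col + mono_ending k col n.+1.
Proof.
rewrite (mono_AP_count_wide n 1) (mono_AP_count_wide n.+1 0) addn0 addn1.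
rewrite -(sum_last_term (N := n.+1)) // -big_split; apply: eq_bigr => a _.
rewrite -big_split; apply: eq_bigr => d _; rewrite /ap_term.
rewrite [_ <= n.+1]leq_eqVlt ltnS.
case: eqP => [->|_] /=; last by rewrite addn0.
by rewrite ltnn; case: (0 < a); case: (0 < d).
Qed.

Lemma mono_AP_count_by_last_term (n : nat) :
  mono_AP_count k n col = \sum_(0 <= x < n) mono_ending k col x.+1.
Proof.
elim: n => [|n IH]; last by rewrite mono_AP_count_succ IH big_nat_recr.
by rewrite /mono_AP_count !big_ord1 big_geq.
Qed.

End LastTermDecomposition.

Section ZmodArithmetic.
Local Open Scope ring_scope.
Variable m : nat.
Hypothesis m_gt1 : (1 < m)%N.

Lemma Zp_nat_eq0 (t : nat) : ((t%:R : 'Z_m) == 0) = (m %| t)%N.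
Proof. by rewrite -(inj_eq val_inj) /= val_Zp_nat. Qed.

Lemma Zp_nat_AP (a d i : nat) : (a%:R + d%:R *+ i : 'Z_m) = (a + i * d)%N%:R.
Proof. by rewrite natrD natrM mulr_natl. Qed.

End ZmodArithmetic.

Definition periodic_coloring (r m : nat) (c : 'Z_m -> 'I_r) (z : nat) : 'I_r :=
  c z%:R%R.

Lemma mono_ap_periodic (r k m : nat) (c : 'Z_m -> 'I_r) : 1 < m ->
  ~ has_nontriv_mono_AP_Zm k c ->
  forall a d, mono_ap k (periodic_coloring c) a d = (m %| d).
Proof.
move=> m_gt1 c_free a d; apply/idP/idP => [mono_ad|m_dvd_d].
  apply/negPn/negP => m_ndvd_d; apply: c_free; exists a%:R%R, d%:R%R.
  split; first by rewrite Zp_nat_eq0.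
  by move=> i; move/forallP: mono_ad => /(_ i)/eqP; rewrite /periodic_coloring Zp_nat_AP.
apply/forallP => i; rewrite /periodic_coloring natrD natrM.
by move: m_dvd_d; rewrite -Zp_nat_eq0 // => /eqP->; rewrite mulr0 addr0.
Qed.

Lemma count_positive_multiples (m B : nat) : 0 < m ->
  \sum_(0 <= d < B.+1) [&& 0 < d & m %| d] = B %/ m.
Proof.
move=> m_gt0; elim: B => [|B IH]; first by rewrite big_nat1 div0n.
by rewrite big_nat_recr //= IH divnS // addnC.
Qed.

Lemma count_multiples_below (L m x : nat) : 0 < L -> 0 < m ->
  \sum_(0 <= d < x) [&& 0 < d, L * d < x & m %| d] = x.-1 %/ (L * m).
Proof.
move=> L_gt0 m_gt0; case: x => [|y]; first by rewrite big_geq // div0n.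
rewrite /= divnMA -count_positive_multiples //.
rewrite (big_cat_nat _ (n := (y %/ L).+1)) //=; last by rewrite ltnS leq_div.
rewrite [X in _ + X]big_nat_cond [X in _ + X]big1 ?addn0; last first.
  move=> d /andP[/andP[lt_yL_d _] _]; apply/nat_of_false/negP => /and3P[_ lt_Ld _].
  by move: lt_yL_d; rewrite ltnNge leq_divRL // mulnC -ltnS lt_Ld.
apply: eq_big_nat => d /andP[_]; rewrite ltnS leq_divRL // mulnC => le_Ld_y.
by rewrite ltnS le_Ld_y.
Qed.

Lemma mono_ending_periodic (r k m : nat) (c : 'Z_m -> 'I_r) : 1 < k -> 1 < m ->
  ~ has_nontriv_mono_AP_Zm k c ->
  forall x, mono_ending k (periodic_coloring c) x = x.-1 %/ ((k - 1) * m).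
Proof.
move=> k_gt1 m_gt1 c_free x; rewrite -count_multiples_below; try lia.
by apply: eq_bigr => d _; rewrite /ends_at mono_ap_periodic.
Qed.

Section FloorSumEstimate.
Local Open Scope ring_scope.

Lemma floor_div_bounds (X M : nat) : (0 < M)%N ->
  (X %/ M)%:R <= X%:R / M%:R :> rat /\ X%:R / M%:R < (X %/ M)%:R + 1 :> rat.
Proof.
move=> M_gt0; have M_pos : 0 < M%:R :> rat by rewrite ltr0n.
split; first by rewrite ler_pdivlMr // -natrM ler_nat leq_divM.
by rewrite ltr_pdivrMr // natr1 -natrM ltr_nat ltn_ceil.
Qed.

(* The floor sum of (s y - 1) / M over y = 1..q is s q^2 / (2 M) up to 2 q,
   provided 1 <= s <= M; both main-term sums of the proof are of this form. *)
Lemma sum_floor_estimate (s M q : nat) : (0 < s)%N -> (s <= M)%N ->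
  `|(\sum_(0 <= y < q) ((s * y.+1).-1 %/ M))%:R - (s * q ^ 2)%:R / (2 * M)%:R|
    <= 2 * q%:R :> rat.
Proof.
move=> s_gt0 le_sM; have M_gt0 : (0 < M)%N by lia.
have M_pos : 0 < M%:R :> rat by rewrite ltr0n.
elim: q => [|q IH]; first by rewrite big_geq //= muln0 !mul0r subrr normr0 mulr0.
set X := (s * q.+1).-1; rewrite big_nat_recr //= natrD -/X.
have [floor_le floor_gt] := floor_div_bounds X M_gt0.
have X_val : X%:R = s%:R * (q%:R + 1) - 1 :> rat.
  have -> : X = (s * q.+1 - 1)%N by rewrite /X; lia.
  by rewrite natrB ?muln_gt0 ?s_gt0 // natrM natr1.
(* The target grows by X / M minus a correction w with |w| <= 1/2. *)
set w := (s%:R - 2) / (2 * M%:R) : rat.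
have target_step : (s * q.+1 ^ 2)%:R / (2 * M)%:R
    = (s * q ^ 2)%:R / (2 * M)%:R + X%:R / M%:R - w :> rat.
  rewrite /w X_val !natrM -natr1; field; by rewrite pnatr_eq0 -lt0n.
have w_lo : - (1 / 2) <= w.
  rewrite /w ler_pdivlMr ?mulr_gt0 //; have : 1 <= s%:R :> rat by rewrite ler1n.
  have : 1 <= M%:R :> rat by rewrite ler1n. lra.
have w_hi : w <= 1 / 2.
  rewrite /w ler_pdivrMr ?mulr_gt0 //; have : s%:R <= M%:R :> rat by rewrite ler_nat.
  lra.
rewrite target_step; move: IH; rewrite !ler_norml -natr1 => /andP[lo hi].
apply/andP; split; lra.
Qed.

End FloorSumEstimate.

(* If f and g agree off the multiples of m, their partial sums differ only by
   their values at the multiples m y, written here without subtraction. *)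
Lemma sum_split_multiples (m n : nat) (f g : nat -> nat) : 0 < m ->
  (forall x, 0 < x -> ~~ (m %| x) -> f x = g x) ->
  \sum_(0 <= x < n) f x.+1 + \sum_(0 <= y < n %/ m) g (m * y.+1)
  = \sum_(0 <= x < n) g x.+1 + \sum_(0 <= y < n %/ m) f (m * y.+1).
Proof.
move=> m_gt0 fg_off; elim: n => [|n IH]; first by rewrite div0n !big_geq.
rewrite (divnS n m_gt0) !big_nat_recr //=.
have [m_dvd|m_ndvd] := boolP (m %| n.+1); last by rewrite add0n fg_off //; lia.
have n1_eq : n.+1 = m * (n %/ m).+1.
  by rewrite -(divnK m_dvd) (divnS n m_gt0) m_dvd add1n mulnC.
by rewrite add1n !big_nat_recr //= -n1_eq; lia.
Qed.

Lemma sum_multiples_reindex (m y : nat) (g : nat -> bool) : 0 < m ->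
  \sum_(0 <= d < m * y) ((m %| d) && g d) = \sum_(0 <= d < y) g (m * d).
Proof.
move=> m_gt0; elim: y => [|y IH]; first by rewrite muln0 !big_geq.
rewrite mulnS addnC (big_cat_nat _ (n := m * y)) //=; last by rewrite leq_addr.
rewrite IH big_nat_recr //=; congr (_ + _).
rewrite big_ltn; last by rewrite -addn1 leq_add2l.
rewrite dvdn_mulr //= [X in _ + X]big_nat_cond [X in _ + X]big1 ?addn0 //.
move=> d /andP[/andP[lt_my_d lt_d] _]; apply/nat_of_false/negP => /andP[/dvdnP[q def_d] _].
move: lt_my_d lt_d; rewrite def_d [q * m]mulnC [m * y + m]addnC -mulnS !ltn_pmul2l //; lia.
Qed.

Section SelfSimilarColoring.
Variables (r k m : nat) (c : 'Z_m -> 'I_r).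
Hypothesis m_gt1 : 1 < m.
Hypothesis k_gt1 : 1 < k.
Hypothesis c_free :
  forall y : 'I_r, ~ has_nontriv_mono_AP_Zm k (fun z : 'Z_m => if z == 0%R then y else c z).

Let m_gt0 : 0 < m. Proof. exact: ltnW. Qed.

(* The self-similar colouring, defined with a fuel argument bounding the
   number of divisions by m; fuel x suffices for x > 0. *)
Fixpoint self_similar_fuel (fuel x : nat) : 'I_r :=
  if fuel is fuel'.+1 then
    if m %| x then self_similar_fuel fuel' (x %/ m) else c x%:R%R
  else c 0%R.

Definition self_similar (x : nat) : 'I_r := self_similar_fuel x x.

Lemma self_similar_fuel_enough (f g x : nat) : 0 < x <= f -> x <= g ->
  self_similar_fuel f x = self_similar_fuel g x.
Proof.
elim: f g x => [|f IH] [|g] x /andP[x_gt0 le_xf] le_xg //=; try lia.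
case: ifP => // m_dvd_x; have lt_xm_x : x %/ m < x by rewrite ltn_Pdiv.
by apply: IH; [rewrite divn_gt0 // (dvdn_leq x_gt0 m_dvd_x) /=|]; lia.
Qed.

Lemma self_similarE (x : nat) : 0 < x ->
  self_similar x = if m %| x then self_similar (x %/ m) else c x%:R%R.
Proof.
case: x => [|y] // _; rewrite /self_similar /=; case: ifP => // m_dvd.
have lt_ym_y : y.+1 %/ m < y.+1 by rewrite ltn_Pdiv.
by apply: self_similar_fuel_enough; rewrite ?divn_gt0 ?(dvdn_leq _ m_dvd) //; lia.
Qed.

Lemma self_similar_scale (t : nat) : 0 < t -> self_similar (m * t) = self_similar t.
Proof.
by move=> t_gt0; rewrite self_similarE ?muln_gt0 ?m_gt0 // dvdn_mulr // mulKn.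
Qed.

(* A difference not divisible by m never gives a monochromatic AP: reduced mod m
   it would be a nontrivial monochromatic AP once 0 gets the colour of a. *)
Lemma mono_ap_self_similar_nonmultiple (a d : nat) : 0 < a -> ~~ (m %| d) ->
  mono_ap k self_similar a d = false.
Proof.
move=> a_gt0 m_ndvd_d; apply/negP => mono_ad.
have reduce t : 0 < t -> self_similar t = self_similar a ->
   (if (t%:R : 'Z_m)%R == 0%R then self_similar a else c t%:R%R) = self_similar a.
  move=> t_gt0; rewrite Zp_nat_eq0 //; case: ifP => // m_ndvd_t.
  by rewrite self_similarE // m_ndvd_t.
apply: (@c_free (self_similar a)); exists a%:R%R, d%:R%R.
split; first by rewrite Zp_nat_eq0.
move=> i; rewrite Zp_nat_AP reduce ?reduce //; first by rewrite addn_gt0 a_gt0.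
by move/forallP: mono_ad => /(_ i)/eqP.
Qed.

(* With m | d and m not dividing a, every term of the AP is coloured like a mod m. *)
Lemma mono_ap_self_similar_multiple (a d : nat) : 0 < a -> ~~ (m %| a) -> m %| d ->
  mono_ap k self_similar a d.
Proof.
move=> a_gt0 m_ndvd_a m_dvd_d; apply/forallP => i; apply/eqP.
have m_dvd_id : m %| i * d by apply: dvdn_mull.
rewrite self_similarE ?addn_gt0 ?a_gt0 // (self_similarE a_gt0).
rewrite (dvdn_addl _ m_dvd_id) (negbTE m_ndvd_a) natrD.
by move: m_dvd_id; rewrite -Zp_nat_eq0 // => /eqP->; rewrite GRing.addr0.
Qed.

(* Dilation by m preserves the colouring, hence monochromaticity of APs. *)
Lemma mono_ap_self_similar_scale (a d : nat) : 0 < a ->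
  mono_ap k self_similar (m * a) (m * d) = mono_ap k self_similar a d.
Proof.
move=> a_gt0; apply: eq_forallb => i.
have -> : m * a + i * (m * d) = m * (a + i * d) by rewrite mulnDr mulnCA.
by rewrite !self_similar_scale // addn_gt0 a_gt0.
Qed.

(* At an x prime to m, exactly the differences d with m | d contribute, as
   for the periodic colouring. *)
Lemma mono_ending_self_similar_nonmultiple (x : nat) : 0 < x -> ~~ (m %| x) ->
  mono_ending k self_similar x = x.-1 %/ ((k - 1) * m).
Proof.
move=> x_gt0 m_ndvd_x; rewrite -count_multiples_below //; last by lia.
apply: eq_bigr => d _; rewrite /ends_at.
case: (posnP d) => [-> //|d_gt0]; case: ltnP => //= lt_Ld_x.
have a_gt0 : 0 < x - (k - 1) * d by lia.
have [m_dvd_d|m_ndvd_d] := boolP (m %| d); last by rewrite mono_ap_self_similar_nonmultiple.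
rewrite mono_ap_self_similar_multiple //; apply: contra m_ndvd_x => m_dvd_a.
by rewrite -(subnK (ltnW lt_Ld_x)) dvdn_add // dvdn_mull.
Qed.

(* Monochromatic APs ending at m * y: differences prime to m contribute nothing,
   and those with m | d are the dilates of the APs ending at y. *)
Lemma mono_ending_self_similar_scale (y : nat) : 0 < y ->
  mono_ending k self_similar (m * y) = mono_ending k self_similar y.
Proof.
move=> y_gt0; rewrite /mono_ending.
transitivity (\sum_(0 <= d < m * y) ((m %| d) && ends_at k self_similar (m * y) d) : nat).
  apply: eq_bigr => d _; have [//|m_ndvd_d] := boolP (m %| d).
  rewrite /ends_at; case: (posnP d) => [-> //|d_gt0]; case: ltnP => //= lt_Ld.
  by rewrite mono_ap_self_similar_nonmultiple //; lia.
rewrite sum_multiples_reindex //; apply: eq_bigr => d _.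
rewrite /ends_at muln_gt0 m_gt0 /=; case: (posnP d) => [-> //|d_gt0] /=.
rewrite mulnCA ltn_pmul2l //; case: ltnP => //= lt_Ld_y.
by rewrite -mulnBr mono_ap_self_similar_scale //; lia.
Qed.

Lemma self_similar_recursion (n : nat) :
  \sum_(0 <= x < n) mono_ending k self_similar x.+1
  + \sum_(0 <= y < n %/ m) (m * y.+1).-1 %/ ((k - 1) * m)
  = \sum_(0 <= x < n) (1 * x.+1).-1 %/ ((k - 1) * m)
  + \sum_(0 <= y < n %/ m) mono_ending k self_similar y.+1.
Proof.
rewrite (@sum_split_multiples m n (mono_ending k self_similar)
                              (fun x => x.-1 %/ ((k - 1) * m))) //.
  by congr (_ + _); apply: eq_bigr => y _; rewrite ?mul1n ?mono_ending_self_similar_scale.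
exact: mono_ending_self_similar_nonmultiple.
Qed.

Local Open Scope ring_scope.

Lemma self_similar_estimate (n : nat) :
  `|(\sum_(0 <= x < n) mono_ending k self_similar x.+1)%:R
    - (n ^ 2)%:R / (2 * (m + 1) * (k - 1))%N%:R| <= 8 * n%:R :> rat.
Proof.
elim/ltn_ind: n => -[|n'] IH; first by rewrite big_geq //= !mul0r subrr normr0 mulr0.
set n := n'.+1; set q := (n %/ m)%N; set L := (k - 1)%N.
have lt_qn : (q < n)%N by rewrite ltn_Pdiv.
have le_2q_n : (2 * q <= n)%N by have := leq_divM n m; rewrite -/q; nia.
have L_gt0 : (0 < L)%N by rewrite /L; lia.
have LM_gt0 : (0 < L * m)%N by rewrite muln_gt0 L_gt0.
have F_est := @sum_floor_estimate 1 (L * m) n (ltnSn 0) LM_gt0.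
have G_est := @sum_floor_estimate m (L * m) q m_gt0 (leq_pmull m L_gt0).
have T_est := IH q lt_qn.
move/(congr1 (fun z => z%:R : rat)): (self_similar_recursion n); rewrite !natrD -/q => rec.
(* The main terms of F, G and T q miss the target by Z / D, which lies in [0, n]. *)
set Z := (n ^ 2 - (m * q) ^ 2)%N; set D := (2 * L * m * (m + 1))%N.
have le_mq2_n2 : ((m * q) ^ 2 <= n ^ 2)%N by rewrite leq_exp2r // mulnC leq_divM.
have D_gt0 : (0 < D)%N by rewrite /D !muln_gt0 L_gt0 m_gt0 addn1.
have le_Z_nD : (Z <= n * D)%N.
  have : (Z <= 2 * m * n)%N by rewrite /Z /q; have := ltn_ceil n m_gt0; nia.
  by move/leq_trans; apply; rewrite /D mulnC leq_mul2l; apply/orP; right; nia.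
have main_terms :
    (1 * n ^ 2)%N%:R / (2 * (L * m))%N%:R - (m * q ^ 2)%N%:R / (2 * (L * m))%N%:R
    - (n ^ 2)%N%:R / (2 * (m + 1) * L)%N%:R + (q ^ 2)%N%:R / (2 * (m + 1) * L)%N%:R
    = Z%:R / D%:R :> rat.
  rewrite /Z /D natrB // !natrM !natrD; field.
  by rewrite natr1 !pnatr_eq0 -!lt0n m_gt0 L_gt0.
have Z_lo : 0 <= Z%:R / D%:R :> rat by rewrite divr_ge0.
have Z_hi : Z%:R / D%:R <= n%:R :> rat by rewrite ler_pdivrMr ?ltr0n // -natrM ler_nat.
have q_le : 2 * q%:R <= n%:R :> rat by rewrite -natrM ler_nat.
move: F_est G_est T_est; rewrite !ler_norml => /andP[? ?] /andP[? ?] /andP[? ?].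
apply/andP; split; lra.
Qed.

End SelfSimilarColoring.

Local Open Scope ring_scope.

Theorem mainTheorem2 (r k m : nat) (hr : (2 <= r)%N) (hk : (3 <= k)%N) (hm : (2 <= m)%N) :
  ((exists c : 'Z_m -> 'I_r, ~ has_nontriv_mono_AP_Zm k c) ->
   exists C : rat, forall n : nat, exists col : nat -> 'I_r,
     `| (mono_AP_count k n col)%:R
        - (n ^ 2)%:R / (2 * m * (k - 1))%N%:R | <= C * n%:R)
  /\
  ((exists c : 'Z_m -> 'I_r,
      forall x : 'I_r,
        ~ has_nontriv_mono_AP_Zm k (fun z : 'Z_m => if z == 0 then x else c z)) ->
   exists C : rat, forall n : nat, exists col : nat -> 'I_r,
     `| (mono_AP_count k n col)%:R
        - (n ^ 2)%:R / (2 * (m + 1) * (k - 1))%N%:R | <= C * n%:R).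
Proof.
have k_gt1 : (1 < k)%N by lia.
have LM_gt0 : (0 < (k - 1) * m)%N by rewrite muln_gt0; apply/andP; split; lia.
split=> -[c c_free]; last first.
  exists 8 => n; exists (self_similar c).
  by rewrite mono_AP_count_by_last_term // self_similar_estimate.
exists 2 => n; exists (periodic_coloring c).
have := @sum_floor_estimate 1 ((k - 1) * m) n (ltnSn 0) LM_gt0.
rewrite [(1 * n ^ 2)%N]mul1n (_ : (2 * ((k - 1) * m) = 2 * m * (k - 1))%N); last by ring.
rewrite mono_AP_count_by_last_term //; congr (`|_%:R - _| <= _); apply: eq_bigr => x _.
by rewrite mono_ending_periodic // mul1n.
Qed.
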